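(* Let $\mathcal{S}\subseteq M^*$ be a fixed domain sequence set and let $L\le2|M|^c$ and $l\ge150c\ln|M|/\ln\ln|M|$ be fixed integers. Let $b$ be a constant and let $k\ge 8(b+1)\frac{\ln|\mathcal{S}|+(c+1)\ln|M|}{\ln l}$. Then a set of $k$ independent uniformly random hash functions $h_1,\dots,h_k:M^*\times I\to\{0,\dots,L-1\}$ is $(L,l)$-good for $\mathcal{S}$ with probability at least $1-2|M|^{-b}$.
   Context: Machines $M$ with standing assumption $|M|\ge32$; $c\ge1$ a constant; $I:=\{1,\dots,|M|^c\}$. A job $j$ has a sequence $\mathrm{seq}(j)\in M^*$ and an identifier $\mathrm{ind}(j)\in I$, identifiers being distinct within a job set. A job set $J$ is $\mathcal{S}$-supported if $\mathrm{seq}(j)\in\mathcal{S}$ for all $j\in J$. $C(J)=\max_m\sum_{j\in J}|\{i:\mathrm{seq}(j)_i=m\}|$, $D(J)=\max_j\mathrm{len}(\mathrm{seq}(j))$. For $h$, $h(j):=h(\mathrm{seq}(j),\mathrm{ind}(j))$ and $\mathrm{virt}(j,i)=h(j)+i$ ($i<\mathrm{len}(\mathrm{seq}(j))$). A bad pattern (for $M,L,l,J$) is a collection of sets $B_{T,m}$, $0\le T<2L$, $m\in M$, of pairs $(j,i)$ with $j\in J$ and $\mathrm{seq}(j)_i=m$, each $j$ appearing at most once overall, $|B_{T,m}|\in\{0\}\cup(l,|J|]$, and $\sum|B_{T,m}|>|J|/2$; it occurs for $h$ if $\mathrm{virt}(j,i)=T$ for all $(j,i)\in B_{T,m}$. $h$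 is $(L,l)$-good for $J$ if no bad pattern occurs for $h$. A set $h_1,\dots,h_k$ is $(L,l)$-good for $\mathcal{S}$ if for every $\mathcal{S}$-supported job set $J$ with $L\ge C(J)+D(J)$, at least one $h_i$ is $(L,l)$-good for $J$. *)

From HB Require Import structures.
From mathcomp Require Import all_boot all_order all_algebra.
From mathcomp Require Import boolp.
Set Implicit Arguments. Unset Strict Implicit. Unset Printing Implicit Defensive.

(* Jobs supported by the sequence set S with identifiers in 'I_nI (0-based
   relabelling of I = {1,...,nI}).  A job is the pair (seq j, ind j). *)
Section Jobs.
Variables (M : finType) (S : seq (seq M)) (nI : nat).

Definition job : finType := (seq_sub S * 'I_nI)%type.
Definition jseq (j : job) : seq M := ssval j.1.
Definition jind (j : job) : 'I_nI := j.2.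

Definition job_set (J : {set job}) : Prop := {in J &, injective jind}.

Definition Cload (J : {set job}) : nat :=
  \max_(m : M) \sum_(j in J) count_mem m (jseq j).
Definition Dlen (J : {set job}) : nat := \max_(j in J) size (jseq j).

Variable L : nat.

Definition virt (h : {ffun job -> 'I_L}) (j : job) (i : nat) : nat := h j + i.

(* B T m is the set B_{T,m}, given as a duplicate-free list of pairs (j, i) *)
Definition bad_pattern (l : nat) (J : {set job})
    (B : 'I_(2 * L) -> M -> seq (job * nat)) : Prop :=
  [/\ forall T m, uniq (B T m),
      forall T m p, p \in B T m ->
        [/\ p.1 \in J, p.2 < size (jseq p.1) & nth m (jseq p.1) p.2 = m],
      forall T m T' m' j i i', (j, i) \in B T m -> (j, i') \in B T' m' ->
        [/\ T = T', m = m' & i = i'],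
      forall T m, size (B T m) = 0 \/ (l < size (B T m) <= #|J|)
    & #|J| < 2 * \sum_(T < 2 * L) \sum_(m : M) size (B T m)].

Definition occurs (h : {ffun job -> 'I_L}) (B : 'I_(2 * L) -> M -> seq (job * nat)) : Prop :=
  forall T m j i, (j, i) \in B T m -> virt h j i = T.

Definition good_for_jobs (l : nat) (h : {ffun job -> 'I_L}) (J : {set job}) : Prop :=
  ~ exists B, bad_pattern l J B /\ occurs h B.

Definition good_for_S (l k : nat) (hs : {ffun 'I_k -> {ffun job -> 'I_L}}) : Prop :=
  forall J : {set job}, job_set J -> Cload J + Dlen J <= L ->
    exists i : 'I_k, good_for_jobs l (hs i) J.

End Jobs.

From HB Require Import structures.
From mathcomp Require Import all_boot all_order all_algebra.
From mathcomp Require Import boolp reals sequences exp.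
From mathcomp Require Import ring lra.
Import Order.TTheory GRing.Theory Num.Theory.
Set Implicit Arguments. Unset Strict Implicit. Unset Printing Implicit Defensive.

(* If h is not good for a job set J, a bad pattern occurs for h.  Recorded as a
   family F of sets of pairs (j, i) indexed by the cells (T, m), it determines
   h(j) for every job it meets, and it meets more than |J|/2 jobs, so at most
   L^(n - |F|) of the L^n functions h are consistent with F, where n is the
   number of possible jobs.  Summing over F with weight (e^a / L)^|A| for each
   set A, the sum factors over the cells, and C(Cload J, t) <= (e L / t)^t
   bounds each factor by 1 + 2 (e^(1+a) / l)^(l+1); hence
     Pr[h bad for J] <= exp(- a |J| / 2 + 2 |cells| (e^(1+a) / l)^(l+1)),
   which for a = (ln l) / 2 and the given l is at most l^(-|J|/8).
   No pattern exists when |J| <= l, so h_1, ..., h_k fail only if all of them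
   are bad for one J with |J| > l; by the union bound this has probability at
   most the sum over such J of l^(-k|J|/8) <= 2 (n l^(-k/8))^(l+1), and the
   choice of k makes n l^(-k/8) <= |M|^(-b). *)

Lemma card_le_sum_cover (T I : finType) (A : {set T}) (P : pred I) (B : I -> {set T}) :
  (forall x, x \in A -> exists2 i, P i & x \in B i) ->
  (#|A| <= \sum_(i | P i) #|B i|)%N.
Proof.
move=> cover.
have -> : (\sum_(i | P i) #|B i| = \sum_(i | P i) \sum_x (x \in B i))%N.
  by apply: eq_bigr => i _; rewrite -sum1_card big_mkcond.
rewrite exchange_big /= -sum1_card big_mkcond /=.
apply: leq_sum => x _; case: ifP => // xA.
have [i Pi xBi] := cover x xA.
by rewrite (bigD1 i) //= xBi leq_addr.
Qed.

Lemma ffact_leq_expn n m : (n ^_ m <= n ^ m)%N.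
Proof.
rewrite ffact_prod -(card_ord m) -prod_nat_const card_ord.
by apply: leq_prod => i _; apply: leq_subr.
Qed.

Lemma bin_leq_expn n t : ('C(n, t) <= n ^ t)%N.
Proof.
apply: leq_trans (ffact_leq_expn n t); rewrite -bin_ffact.
by rewrite leq_pmulr // fact_gt0.
Qed.

Lemma card_ffun_in_family (T U : finType) (G : T -> {set U}) :
  #|[set h : {ffun T -> U} | [forall j, h j \in G j]]| = (\prod_j #|G j|)%N.
Proof.
rewrite (@eq_card _ _ (family (fun j => mem (G j)))); last first.
  by move=> h; rewrite inE; apply/forallP/familyP.
by rewrite card_family foldr_map enumT bigop.unlock.
Qed.

Lemma card_ord_nth_eq (T : eqType) (x0 x : T) (s : seq T) (n : nat) : (size s <= n)%N ->
  #|[set i : 'I_n | (i < size s) && (nth x0 s i == x)]| = count_mem x s.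
Proof.
move=> sn; rewrite -sum1dep_card -sum1_count (big_nth x0) big_mkord.
rewrite (big_ord_widen_cond _ (fun i => pred1 x (nth x0 s i)) (fun _ => 1) sn).
by apply: eq_bigl => i; rewrite andbC.
Qed.

Local Open Scope ring_scope.

Lemma sum_subsets_card (R : pzSemiRingType) (T : finType) (B : {set T}) (g : nat -> R) :
  \sum_(A : {set T} | A \subset B) g #|A| = \sum_(t < #|T|.+1) 'C(#|B|, t)%:R * g t.
Proof.
have cardA (A : {set T}) : (#|A| < #|T|.+1)%N by rewrite ltnS max_card.
rewrite (partition_big (fun A : {set T} => Ordinal (cardA A)) xpredT) //=.
apply: eq_bigr => t _.
rewrite (eq_bigr (fun _ => g t)); last by move=> A /andP[_ /eqP <-].
rewrite sumr_const -cards_draws mulr_natl; congr (_ *+ _).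
by apply: eq_card => A; rewrite [in LHS]unfold_in inE -val_eqE.
Qed.

Lemma sum_geom_tail_le (R : realFieldType) (r : R) (l n : nat) : 0 <= r -> r <= 1 / 2 ->
  \sum_(t < n | (l < t)%N) r ^+ t <= 2 * r ^+ l.+1.
Proof.
move=> r0 r_le_half; rewrite big_mkcond /=.
suff : \sum_(t < n) (if (l < t)%N then r ^+ t else 0) +
        2 * r ^+ (maxn n l.+1) <= 2 * r ^+ l.+1.
  by apply: le_trans; rewrite lerDl mulr_ge0 // exprn_ge0.
elim: n => [|n IH]; first by rewrite big_ord0 add0r max0n.
have rn2 : 2 * r ^+ n.+1 <= r ^+ n.
  by rewrite exprS mulrA ler_piMl ?exprn_ge0 //; lra.
rewrite big_ord_recr /=; case: (ltngtP l n) IH => [ln|nl|<-] IH.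
- rewrite (maxn_idPl ln) (maxn_idPl (leqW ln)) in IH *.
  by apply: le_trans IH; have := exprn_ge0 n r0; lra.
- rewrite addr0 (@maxn_idPr n.+1 l.+1 (ltnW nl)).
  by rewrite (@maxn_idPr n l.+1 (leqW (ltnW nl))) in IH.
- by rewrite addr0 maxnn (maxn_idPr (leqnSn l)) in IH *.
Qed.

Lemma prod_1D_le_expR (R : realType) (I : finType) (d : I -> R) (e : R) :
  (forall i, 0 <= d i <= e) -> \prod_i (1 + d i) <= expR (#|I|%:R * e).
Proof.
move=> d_bnd; rewrite expRM_natl -prodr_const.
apply: ler_prod => i _; have /andP [d0 de] := d_bnd i.
apply/andP; split; first lra.
by apply: le_trans (expR_ge1Dx _) _; rewrite ler_expR.
Qed.

Lemma expn_div_fact_le_expR (R : realType) (t : nat) :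
  (t%:R : R) ^+ t / (t`!)%:R <= expR 1 ^+ t.
Proof.
case: t => [|t]; first by rewrite expr0 fact0 divr1.
by rewrite -expRM_natl mulr1; have := @expR_ge1Dxn R t.+1%:R t (ler0n _ _); lra.
Qed.

Lemma bin_mulX_le (R : realType) (C L t : nat) (z : R) :
  (C <= L)%N -> (0 < L)%N -> (0 < t)%N -> 0 <= z ->
  'C(C, t)%:R * (z / L%:R) ^+ t <= (expR 1 * z / t%:R) ^+ t.
Proof.
move=> CL L0 t0 z0.
have Lp : (0 : R) < L%:R by rewrite ltr0n.
have tp : (0 : R) < t%:R by rewrite ltr0n.
have fp : (0 : R) < (t`!)%:R by rewrite ltr0n fact_gt0.
have binC : ('C(C, t)%:R : R) <= L%:R ^+ t / (t`!)%:R.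
  rewrite ler_pdivlMr // -natrM -natrX ler_nat bin_ffact.
  by apply: leq_trans (ffact_leq_expn _ _) _; rewrite leq_exp2r.
apply: le_trans (ler_wpM2r _ binC) _; first by rewrite exprn_ge0 // divr_ge0 // ltW.
have -> : L%:R ^+ t / (t`!)%:R * (z / L%:R) ^+ t =
          (z ^+ t / t%:R ^+ t) * (t%:R ^+ t / (t`!)%:R).
  by rewrite expr_div_n; field; rewrite !gt_eqF // exprn_gt0.
have -> : (expR 1 * z / t%:R) ^+ t = (z ^+ t / t%:R ^+ t) * expR 1 ^+ t.
  by rewrite expr_div_n exprMn; field; rewrite gt_eqF // exprn_gt0.
apply: ler_wpM2l; last exact: expn_div_fact_le_expR.
by rewrite divr_ge0 // ?exprn_ge0 // ltW.
Qed.

Lemma sum_large_subsets_le (R : realFieldType) (T : finType) (l : nat) (w : R) :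
  0 <= w -> #|T|%:R * w <= 1 / 2 ->
  \sum_(A : {set T} | (l < #|A|)%N) w ^+ #|A| <= 2 * (#|T|%:R * w) ^+ l.+1.
Proof.
move=> w0 Tw.
pose g (t : nat) : R := if (l < t)%N then w ^+ t else 0.
have -> : \sum_(A : {set T} | (l < #|A|)%N) w ^+ #|A| =
          \sum_(A : {set T} | A \subset [set: T]) g #|A|.
  by rewrite big_mkcond [RHS]big_mkcond; apply: eq_bigr => A _; rewrite subsetT.
rewrite sum_subsets_card cardsT.
apply: le_trans (sum_geom_tail_le _ #|T|.+1 _ Tw); last by rewrite mulr_ge0.
rewrite [X in _ <= X]big_mkcond /=; apply: ler_sum => t _.
rewrite /g; case: ifP => _; last by rewrite mulr0.
by rewrite exprMn ler_wpM2r ?exprn_ge0 // -natrX ler_nat bin_leq_expn.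
Qed.

Lemma card_set_ratio_ge (R : realFieldType) (T : finType) (A : {set T}) (e : R) :
  (0 < #|T|)%N -> #|~: A|%:R <= #|T|%:R * e -> 1 - e <= #|A|%:R / #|T|%:R.
Proof.
move=> T_gt0 compl_le; have T_gt0' : (0 : R) < #|T|%:R by rewrite ltr0n.
have -> : #|A|%:R = #|T|%:R - #|~: A|%:R :> R by rewrite -(cardsC A) natrD addrK.
by rewrite mulrBl divff ?gt_eqF // lerD2l lerN2 ler_pdivrMr // mulrC.
Qed.

Section Constants.
Variable R : realType.

Lemma expR1_ge2 : 2 <= expR (1 : R).
Proof. by have := @expR_ge1Dx R 1; lra. Qed.

Lemma expR1_le4 : expR (1 : R) <= 4.
Proof.
have half_le2 : expR (1 / 2 : R) <= 2.
  have := @expR_ge1Dx R (- (1 / 2)); have := @expRxMexpNx_1 R (1 / 2).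
  have := @expR_gt0 R (1 / 2); nra.
rewrite -[X in expR X](_ : 2%:R * (1 / 2) = 1 :> R); last by field.
by rewrite expRM_natl (_ : 4 = 2 ^+ 2) ?lerXn2r ?nnegrE ?expR_ge0 //; lra.
Qed.

Lemma ln_natr_gt (m n : nat) : (4 ^ m < n)%N -> m%:R < ln (n%:R : R).
Proof.
move=> lt_n; have n_gt0 : (0 < n)%N by apply: leq_ltn_trans lt_n.
rewrite -ltr_expR lnK ?posrE ?ltr0n // -[m%:R]mulr1 expRM_natl.
apply: le_lt_trans (_ : 4 ^+ m < _); last by rewrite -natrX ltr_nat.
by rewrite lerXn2r ?nnegrE ?expR_ge0 ?expR1_le4.
Qed.

Lemma ln_le_half (u : R) : 0 < u -> ln u <= u / 2.
Proof.
move=> u0.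
have ln2 : ln (2 : R) <= 1.
  by rewrite -[leRHS](@expRK R) ler_ln ?posrE ?expR_gt0 ?expR1_ge2.
have -> : u = (1 + (u / 2 - 1)) * 2 by field.
have := @le_ln1Dx R (u / 2 - 1).
by rewrite lnM ?posrE; lra.
Qed.

End Constants.

Section Patterns.
Variables (M : finType) (S : seq (seq M)) (nI L l : nat) (J : {set job S nI}).
Local Notation job := (job S nI).

Definition maxlen : nat := \max_(s <- S) size s.

(* The pairs (j, i) of a bad pattern, with the position i bounded so that they
   form a finite type. *)
Definition slot : finType := (job * 'I_maxlen)%type.
Definition cell : finType := ('I_(2 * L) * M)%type.

Definition slots_on (m : M) : {set slot} :=
  [set p : slot | [&& p.1 \in J, (p.2 < size (jseq p.1))%N & nth m (jseq p.1) p.2 == m]].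

Definition consistent (h : {ffun job -> 'I_L}) (F : {ffun cell -> {set slot}}) : bool :=
  [forall k : cell, forall p in F k, (h p.1 + p.2 == k.1)%N].

Definition pattern_size (F : {ffun cell -> {set slot}}) : nat := (\sum_k #|F k|)%N.

(* A bad pattern for J, the set B_{T,m} being recorded as F (T, m). *)
Definition is_pattern (F : {ffun cell -> {set slot}}) : bool :=
  [&& [forall k, F k \subset slots_on k.2],
      [forall k, (F k == set0) || (l < #|F k|)%N],
      [forall k1, forall k2, forall p1 in F k1, forall p2 in F k2,
          (p1.1 == p2.1) ==> ((k1 == k2) && (p1 == p2))]
    & (#|J| < 2 * pattern_size F)%N].

Lemma size_jseq_le_maxlen (j : job) : (size (jseq j) <= maxlen)%N.
Proof. by apply: (leq_bigmax_seq (F := size)) => //; exact: ssvalP. Qed.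

Lemma size_le_card_slots (s : seq (job * nat)) :
  uniq s -> (forall x, x \in s -> x.2 < maxlen)%N ->
  (size s <= #|[set p : slot | (p.1, nat_of_ord p.2) \in s]|)%N.
Proof.
elim: s => [|x s IH] //= /andP[xs us] s_bnd.
have xK : (x.2 < maxlen)%N by apply: s_bnd; rewrite inE eqxx.
have -> : [set p : slot | (p.1, nat_of_ord p.2) \in x :: s] =
          (x.1, Ordinal xK) |: [set p : slot | (p.1, nat_of_ord p.2) \in s].
  by apply/setP => p; rewrite !inE.
rewrite cardsU1 inE /= -surjective_pairing (negbTE xs) add1n ltnS.
by apply: IH => // y ys; apply: s_bnd; rewrite inE ys orbT.
Qed.

Lemma pattern_of_not_good (h : {ffun job -> 'I_L}) : ~ good_for_jobs l h J ->
  exists F, is_pattern F && consistent h F.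
Proof.
move=> /contrapT [B [[B_uniq B_slot B_once B_size B_sum] B_occ]].
pose F : {ffun cell -> {set slot}} :=
  [ffun k : cell => [set p : slot | (p.1, nat_of_ord p.2) \in B k.1 k.2]].
have FE k p : (p \in F k) = ((p.1, nat_of_ord p.2) \in B k.1 k.2) by rewrite ffunE inE.
have B_bnd k x : x \in B k.1 k.2 -> (x.2 < maxlen)%N.
  case: x => j i /B_slot [_ /= + _] => /leq_trans; apply; exact: size_jseq_le_maxlen.
have size_le k : (size (B k.1 k.2) <= #|F k|)%N.
  apply: leq_trans (size_le_card_slots (B_uniq _ _) (B_bnd k)) _.
  by apply: subset_leq_card; apply/subsetP => p; rewrite inE FE.
exists F; apply/andP; split; last first.
  apply/forallP => k; apply/forall_inP => p; rewrite FE => /B_occ.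
  by rewrite /virt => ->.
apply/and4P; split.
- apply/forallP => k; apply/subsetP => p; rewrite FE => /B_slot [pJ ps pn].
  by rewrite inE pJ ps /= pn eqxx.
- apply/forallP => k; case: (B_size k.1 k.2) => [/size0nil B0|/andP[lt _]].
    by apply/orP; left; apply/eqP/setP => p; rewrite FE inE B0.
  by apply/orP; right; apply: leq_trans lt (size_le k).
- apply/forallP => -[T m]; apply/forallP => -[T' m']; apply/forall_inP => -[j i].
  rewrite FE /= => p1F; apply/forall_inP => -[j' i']; rewrite FE /= => p2F.
  apply/implyP => /eqP Ej; rewrite -Ej in p2F.
  have [-> -> Ei] := B_once _ _ _ _ _ _ _ p1F p2F.
  by rewrite Ej !eqxx /=; apply/eqP; congr pair; apply: val_inj.
- apply: leq_trans B_sum _; rewrite leq_mul2l /pattern_size pair_bigA /=.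
  by apply: leq_sum => k _; exact: size_le.
Qed.

Section OnePattern.
Variable F : {ffun cell -> {set slot}}.
Hypothesis F_pattern : is_pattern F.

Lemma pattern_job_inj k1 k2 p1 p2 : p1 \in F k1 -> p2 \in F k2 -> p1.1 = p2.1 ->
  k1 = k2 /\ p1 = p2.
Proof.
move: F_pattern => /and4P [_ _ /forallP /(_ k1) /forallP /(_ k2) /forall_inP F_inj _].
move=> /F_inj /forall_inP F_inj1 /F_inj1 + E; rewrite E eqxx /=.
by move=> /andP [/eqP -> /eqP ->].
Qed.

Definition pattern_jobs : {set job} :=
  [set j | [exists k : cell, exists p in F k, p.1 == j]].

Lemma pattern_size_le_card_jobs : (pattern_size F <= #|pattern_jobs|)%N.
Proof.
pose Q := [set q : cell * slot | q.2 \in F q.1].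
have -> : pattern_size F = #|Q|.
  rewrite /pattern_size -sum1_card (eq_bigr (fun k => \sum_(p in F k) 1)%N).
    rewrite (pair_big_dep xpredT (fun k p => p \in F k)) /=.
    by apply: eq_bigl => q; rewrite inE.
  by move=> k _; rewrite sum1_card.
rewrite -(@card_in_imset _ _ (fun q : cell * slot => q.2.1)).
  apply: subset_leq_card; apply/subsetP => j /imsetP [q]; rewrite inE => qF ->.
  by rewrite inE; apply/existsP; exists q.1; apply/exists_inP; exists q.2.
move=> [k p] [k' p']; rewrite !inE /= => pF p'F E.
by have [-> ->] := pattern_job_inj pF p'F E.
Qed.

Definition pattern_range (j : job) : {set 'I_L} :=
  [set x : 'I_L | [forall k : cell, forall p in F k, (p.1 == j) ==> (x + p.2 == k.1)%N]].

Lemma card_pattern_range_le1 j : j \in pattern_jobs -> (#|pattern_range j| <= 1)%N.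
Proof.
rewrite inE => /existsP [k /exists_inP [p pF /eqP pj]].
apply/card_le1P => x; rewrite inE => /forallP /(_ k) /forall_inP /(_ p pF).
rewrite pj eqxx /= => /eqP Ex y; rewrite inE.
apply/idP/idP => [/forallP /(_ k) /forall_inP /(_ p pF)|/eqP ->].
  rewrite pj eqxx /= => /eqP Ey; apply/eqP/val_inj/eqP.
  by rewrite -(eqn_add2r p.2) Ex Ey.
apply/forallP => k'; apply/forall_inP => p' p'F; apply/implyP => /eqP E'.
by have [-> ->] := pattern_job_inj p'F pF (etrans E' (esym pj)); rewrite Ex.
Qed.

Lemma card_consistent_le : (0 < L)%N ->
  (#|[set h | consistent h F]| * L ^ pattern_size F <= L ^ #|job|)%N.
Proof.
move=> L0.
have consistent_in_range : (#|[set h | consistent h F]| <=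
    #|[set h : {ffun job -> 'I_L} | [forall j, h j \in pattern_range j]]|)%N.
  apply: subset_leq_card; apply/subsetP => h; rewrite !inE => /forallP h_cons.
  apply/forallP => j; rewrite inE; apply/forallP => k; apply/forall_inP => p pF.
  by apply/implyP => /eqP <-; move: (h_cons k) => /forall_inP; apply.
have prod_range : (\prod_j #|pattern_range j| <= L ^ #|[predC pattern_jobs]|)%N.
  rewrite -prod_nat_const (bigID (mem pattern_jobs)) /= -[leqRHS]mul1n.
  apply: leq_mul.
    apply: (@leq_trans (\prod_(j in pattern_jobs) 1)%N); last by rewrite big1_eq.
    by apply: leq_prod => j /card_pattern_range_le1.
  by apply: leq_prod => j _; rewrite -[leqRHS]card_ord max_card.
rewrite -(cardC pattern_jobs) addnC expnD.
apply: leq_mul (leq_pexp2l L0 pattern_size_le_card_jobs).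
by apply: leq_trans consistent_in_range _; rewrite card_ffun_in_family.
Qed.

End OnePattern.

Lemma card_slots_on_le_Cload m : (#|slots_on m| <= Cload J)%N.
Proof.
apply: (@leq_trans (\sum_(j in J) count_mem m (jseq j))%N); last first.
  exact: (leq_bigmax (F := fun m => \sum_(j in J) count_mem m (jseq j))%N).
rewrite -sum1_card (partition_big (fun p : slot => p.1) (mem J)) /=; last first.
  by move=> p; rewrite inE => /andP [].
apply: leq_sum => j _; rewrite sum1dep_card.
rewrite -(card_ord_nth_eq m m (size_jseq_le_maxlen j)).
apply: leq_trans (leq_imset_card (pair j) _); apply: subset_leq_card.
apply/subsetP => -[j' i]; rewrite !inE /= => /andP [/and3P [_ ilt nth_m] /eqP Ej].
by subst j'; apply/imsetP; exists i; rewrite // inE ilt.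
Qed.

End Patterns.

Section BadFraction.
Variables (R : realType) (M : finType) (S : seq (seq M)) (nI L l : nat).
Variable J : {set job S nI}.
Local Notation job := (job S nI).
Local Notation slot := (slot S nI).
Local Notation cell := (cell M L).
Local Notation pattern := {ffun cell -> {set slot}}.

Definition bad_hashes : {set {ffun job -> 'I_L}} :=
  [set h | ~~ `[< good_for_jobs l h J >]].

(* Generating function of the admissible choices A of B_{T,m} for the cell
   k = (T, m), with weight [y / L] per element. *)
Definition cell_weight (y : R) (k : cell) (A : {set slot}) : R :=
  if (A \subset slots_on J k.2) && ((A == set0) || (l < #|A|)%N)
  then (y / L%:R) ^+ #|A| else 0.

Lemma cell_weight_ge0 y k A : 0 <= y -> 0 <= cell_weight y k A.
Proof. by move=> y0; rewrite /cell_weight; case: ifP => // _; rewrite exprn_ge0 ?divr_ge0. Qed.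

Lemma card_bad_hashes_le :
  (#|bad_hashes| <= \sum_(F : pattern | is_pattern l J F) #|[set h | consistent h F]|)%N.
Proof.
apply: card_le_sum_cover => h; rewrite inE => /asboolPn /pattern_of_not_good [F /andP [FP hF]].
by exists F; rewrite ?inE.
Qed.

Lemma invX_pattern_size_le (a : R) (F : pattern) :
  (0 < L)%N -> 0 <= a -> is_pattern l J F ->
  (L%:R ^+ pattern_size F)^-1 <=
    expR (- (#|J|%:R * a / 2)) * \prod_k cell_weight (expR a) k (F k).
Proof.
move=> L0 a0 /and4P [/forallP F_sub /forallP F_size _ J_lt].
have -> : \prod_k cell_weight (expR a) k (F k) = (expR a / L%:R) ^+ pattern_size F.
  by rewrite /pattern_size -prodrXr; apply: eq_bigr => k _; rewrite /cell_weight F_sub F_size.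
rewrite expr_div_n -expRM_natl mulrCA mulrA -expRD mulrC.
apply: ler_peMr; first by rewrite invr_ge0 exprn_ge0.
apply: le_trans (expR_ge1Dx _); rewrite lerDl subr_ge0 ler_pdivrMr // mulrAC [_ * 2]mulrC.
by rewrite ler_wpM2r // -natrM ler_nat ltnW.
Qed.

Lemma sum_cell_weight (y : R) (k : cell) :
  \sum_A cell_weight y k A =
    1 + \sum_(t < #|slot|.+1 | (l < t)%N) 'C(#|slots_on J k.2|, t)%:R * (y / L%:R) ^+ t.
Proof.
pose g (t : nat) : R := if (t == 0%N) || (l < t)%N then (y / L%:R) ^+ t else 0.
rewrite /cell_weight -big_mkcond big_mkcondr /=.
rewrite (eq_bigr (fun A : {set slot} => g #|A|)); last by move=> A _; rewrite /g cards_eq0.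
rewrite sum_subsets_card big_ord_recl [in RHS]big_mkcond big_ord_recl /= bin0 /g /=.
rewrite expr0 mulr1 add0r; congr (_ + _); apply: eq_bigr => i _.
by case: ifP => _; rewrite ?mulr0.
Qed.

Lemma sum_cell_weight_le (y : R) (k : cell) : (0 < L)%N -> (0 < l)%N -> (Cload J <= L)%N ->
  0 <= y -> expR 1 * y / l%:R <= 1 / 2 ->
  \sum_A cell_weight y k A <= 1 + 2 * (expR 1 * y / l%:R) ^+ l.+1.
Proof.
move=> L0 l0 CL y0 r_le_half.
rewrite sum_cell_weight lerD2l.
apply: le_trans (sum_geom_tail_le _ #|slot|.+1 _ r_le_half); last first.
  by rewrite divr_ge0 ?mulr_ge0 ?expR_ge0.
apply: ler_sum => t lt; have t0 : (0 < t)%N by apply: leq_ltn_trans lt.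
apply: le_trans (bin_mulX_le _ _ _ _) _ => //.
  exact: leq_trans (card_slots_on_le_Cload J k.2) CL.
rewrite lerXn2r ?nnegrE ?divr_ge0 ?mulr_ge0 ?expR_ge0 //.
by rewrite ler_wpM2l ?mulr_ge0 ?expR_ge0 // lef_pV2 ?posrE ?ltr0n // ler_nat ltnW.
Qed.

Lemma bad_hashes_fraction_le (a : R) : (0 < L)%N -> (0 < l)%N -> 0 <= a -> (Cload J <= L)%N ->
  expR 1 * expR a / l%:R <= 1 / 2 ->
  #|bad_hashes|%:R / (L ^ #|job|)%:R <=
    expR (- (#|J|%:R * a / 2)) * expR (#|cell|%:R * (2 * (expR 1 * expR a / l%:R) ^+ l.+1)).
Proof.
move=> L0 l0 a0 CL r_le_half.
set E := expR (- (#|J|%:R * a / 2)).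
set w := cell_weight (expR a).
have Ln_gt0 : (0 : R) < (L ^ #|job|)%:R by rewrite ltr0n expn_gt0 L0.
have w_ge0 k A : 0 <= w k A by apply: cell_weight_ge0; exact: expR_ge0.
rewrite ler_pdivrMr // [leRHS]mulrC.
have := card_bad_hashes_le; rewrite -(ler_nat R) natr_sum => /le_trans; apply.
apply: (@le_trans _ _ (\sum_(F : pattern | is_pattern l J F)
                         (L ^ #|job|)%:R * (E * \prod_k w k (F k)))).
  apply: ler_sum => F FP.
  have := card_consistent_le FP L0.
  rewrite -(ler_nat R) natrM natrX -ler_pdivlMr ?exprn_gt0 ?ltr0n //.
  move/le_trans; apply; apply: ler_wpM2l; [exact: ltW | exact: invX_pattern_size_le].
rewrite -mulr_sumr ler_pM2l // -mulr_sumr ler_pM2l ?expR_gt0 //.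
apply: (@le_trans _ _ (\sum_(F : pattern) \prod_k w k (F k))).
  rewrite [leRHS](bigID (is_pattern l J)) /= lerDl.
  by apply: sumr_ge0 => F _; apply: prodr_ge0 => k _.
have -> : \sum_(F : pattern) \prod_k w k (F k) = \prod_k \sum_A w k A.
  by rewrite bigA_distr_bigA.
rewrite (eq_bigr (fun k => 1 + (\sum_A w k A - 1))); last by move=> k _; rewrite addrC subrK.
apply: prod_1D_le_expR => k; rewrite sum_cell_weight addrC addKr; apply/andP; split.
  by apply: sumr_ge0 => t _; rewrite mulr_ge0 ?exprn_ge0 ?divr_ge0 ?expR_ge0.
by rewrite -(lerD2l 1) -sum_cell_weight sum_cell_weight_le ?expR_ge0.
Qed.

(* The choice [a = (ln l) / 2] makes the ratio [r] of [bad_hashes_fraction_le]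
   equal to [e^(1 - (ln l)/2)]. *)
Lemma bad_hashes_le_expR_ln : (0 < L)%N -> (0 < l)%N -> (l < #|J|)%N -> (Cload J <= L)%N ->
  4 <= ln (l%:R : R) ->
  #|cell|%:R * (2 * expR (1 - ln (l%:R : R) / 2) ^+ l.+1) <= 1 ->
  #|bad_hashes|%:R <= (L ^ #|job|)%:R * expR (- (ln (l%:R : R) / 8)) ^+ #|J|.
Proof.
move=> L0 l0 lJ CL lam_ge4 mass_le1.
set lam := ln (l%:R : R) in lam_ge4 mass_le1 *.
have r_eq : expR 1 * expR (lam / 2) / l%:R = expR (1 - lam / 2).
  have <- : expR lam = l%:R by rewrite lnK // posrE ltr0n.
  by rewrite -expRD -expRB; congr expR; lra.
have r_le_half : expR (1 - lam / 2) <= 1 / 2.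
  apply: le_trans (_ : expR (-1) <= _); first by rewrite ler_expR; lra.
  by rewrite expRN mul1r lef_pV2 ?posrE ?expR_gt0 // expR1_ge2.
have a_ge0 : 0 <= lam / 2 by lra.
have := bad_hashes_fraction_le L0 l0 a_ge0 CL; rewrite r_eq => /(_ r_le_half).
have Ln_gt0 : (0 : R) < (L ^ #|job|)%:R by rewrite ltr0n expn_gt0 L0.
rewrite ler_pdivrMr // [leRHS]mulrC => /le_trans; apply.
rewrite ler_pM2l // -[leRHS]expRM_natl -expRD ler_expR.
have J_ge : l.+1%:R <= #|J|%:R :> R by rewrite ler_nat.
have : 4 * #|J|%:R <= #|J|%:R * lam :> R by rewrite mulrC ler_wpM2l.
rewrite -natr1 in J_ge; have : 1 <= l%:R :> R by rewrite ler1n.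
lra.
Qed.

End BadFraction.

Section UnionBound.
Variables (M : finType) (S : seq (seq M)) (nI L l k : nat).
Local Notation job := (job S nI).
Local Notation hash_tuple := {ffun 'I_k -> {ffun job -> 'I_L}}.

Lemma good_for_jobs_small (J : {set job}) (h : {ffun job -> 'I_L}) :
  (#|J| <= l)%N -> good_for_jobs l h J.
Proof.
move=> Jl [B [[_ _ _ B_size B_sum] _]].
suff B0 : (\sum_(T < 2 * L) \sum_(m : M) size (B T m) = 0)%N by rewrite B0 muln0 in B_sum.
apply: big1 => T _; apply: big1 => m _.
case: (B_size T m) => // /andP [lt le].
by have := leq_ltn_trans (leq_trans le Jl) lt; rewrite ltnn.
Qed.

(* The union runs over all job sets. *)
Lemma card_not_good_for_S_le : (0 < k)%N ->
  (#|~: [set hs : hash_tuple | `[< good_for_S l hs >]]| <=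
   \sum_(J : {set job} | (l < #|J|) && (Cload J <= L)) #|bad_hashes L l J| ^ k)%N.
Proof.
move=> k0.
rewrite (eq_bigr (fun J => #|[set hs : hash_tuple in ffun_on (mem (bad_hashes L l J))]|));
  last first.
  by move=> J _; rewrite [RHS]cardsE card_ffun_on card_ord.
apply: card_le_sum_cover => hs; rewrite !inE => /asboolPn.
move=> /existsNP [J /not_implyP [_ /not_implyP [CD_le /forallNP not_good]]].
exists J.
  rewrite (leq_trans (leq_addr _ _) CD_le) andbT ltnNge; apply/negP => Jl.
  by apply: (not_good (Ordinal k0)); exact: good_for_jobs_small.
by rewrite inE; apply/ffun_onP => i; rewrite inE; apply/asboolPn; exact: not_good.
Qed.

Lemma not_good_fraction_le (R : realType) (q : R) : (0 < k)%N -> 0 <= q ->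
  #|job|%:R * q ^+ k <= 1 / 2 ->
  (forall J : {set job}, (l < #|J|)%N -> (Cload J <= L)%N ->
     #|bad_hashes L l J|%:R <= (L ^ #|job|)%:R * q ^+ #|J|) ->
  #|~: [set hs : hash_tuple | `[< good_for_S l hs >]]|%:R <=
    ((L ^ #|job|) ^ k)%:R * (2 * (#|job|%:R * q ^+ k) ^+ l.+1).
Proof.
move=> k0 q0 nq bad_le.
have := card_not_good_for_S_le k0; rewrite -(ler_nat R) natr_sum => /le_trans; apply.
apply: (@le_trans _ _ (\sum_(J : {set job} | (l < #|J|)%N)
   ((L ^ #|job|) ^ k)%:R * (q ^+ k) ^+ #|J|)).
  rewrite [leRHS]big_mkcond [leLHS]big_mkcond /=; apply: ler_sum => J _.
  case: (ltnP l #|J|) => //= lJ; case: leqP => //= CL; last first.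
    by rewrite mulr_ge0 ?exprn_ge0.
  rewrite natrX natrX -exprM mulnC exprM -exprMn lerXn2r ?nnegrE ?mulr_ge0 ?exprn_ge0 //.
  exact: bad_le.
rewrite -mulr_sumr ler_wpM2l //; apply: sum_large_subsets_le => //.
exact: exprn_ge0.
Qed.

Lemma good_for_S_fraction_ge (R : realType) (e : R) :
  (0 < k)%N -> (0 < L)%N -> (0 < l)%N -> 4 <= ln (l%:R : R) ->
  #|cell M L|%:R * (2 * expR (1 - ln (l%:R : R) / 2) ^+ l.+1) <= 1 ->
  #|job|%:R * expR (- (ln (l%:R : R) / 8)) ^+ k <= e -> 2 * e < 1 ->
  1 - 2 * e <= #|[set hs : hash_tuple | `[< good_for_S l hs >]]|%:R / #|{: hash_tuple}|%:R.
Proof.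
move=> k0 L0 l0 lam_ge4 mass_le1 weight_le e_lt.
have weight_ge0 : 0 <= #|job|%:R * expR (- (ln (l%:R : R) / 8)) ^+ k.
  by rewrite mulr_ge0 ?exprn_ge0 ?expR_ge0.
apply: card_set_ratio_ge; first by rewrite card_ffun card_ffun !card_ord !expn_gt0 L0.
rewrite !card_ffun !card_ord.
apply: le_trans (not_good_fraction_le k0 (expR_ge0 _) _ _) _; first by lra.
  by move=> J lJ CL; exact: bad_hashes_le_expR_ln.
apply/ler_wpM2l/ler_wpM2l => //; apply: (le_trans _ weight_le).
by rewrite exprS ler_piMr ?exprn_ile1 //; lra.
Qed.

End UnionBound.

Section Estimates.
Variable R : realType.

Lemma threshold_ge300 (x c l : R) : 1 < x -> 1 <= c -> 150 * c * x / ln x <= l -> 300 <= l.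
Proof.
move=> x_gt1 c_ge1 l_ge; have lnx_gt0 := ln_gt0 x_gt1.
have cx_gt0 : 0 < 150 * c * x by rewrite !mulr_gt0 //; lra.
have l_ge0 : 0 <= l by apply: le_trans l_ge; rewrite divr_ge0 ?ltW.
have cx_le : 150 * c * x <= l * ln x by rewrite -ler_pdivrMr.
have lnx_le : l * ln x <= l * (x / 2) by rewrite ler_wpM2l // ln_le_half //; lra.
have : 300 * c <= l by rewrite -(@ler_pM2r _ x); lra.
lra.
Qed.

Lemma threshold_le_mul_ln (x c l : R) : 1 < x -> 1 <= c -> 150 * c * x / ln x <= l ->
  75 * c * x <= l * ln l.
Proof.
move=> x_gt1 c_ge1 l_ge; have lnx_gt0 := ln_gt0 x_gt1.
have l_gt0 : 0 < l by have := threshold_ge300 x_gt1 c_ge1 l_ge; lra.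
have cx_le : 150 * c * x <= l * ln x by rewrite -ler_pdivrMr.
have : ln x <= ln (150 * c * x) by rewrite ler_ln ?posrE; nra.
have : ln (150 * c * x) <= ln l + ln (ln x).
  by rewrite -lnM ?posrE ?ler_ln ?posrE ?mulr_gt0 //; nra.
have := ln_le_half lnx_gt0.
nra.
Qed.

(* [2 L |M|] cells, each contributing [2 r^(l+1)] with [r = e^(1 - (ln l)/2)]. *)
Lemma cells_mass_le1 (x c lam L : R) (l : nat) : 1 < x -> 1 <= c -> 4 <= lam ->
  75 * c * x <= l%:R * lam -> 0 <= L -> L <= 2 * expR (c * x) ->
  2 * L * expR x * (2 * expR (1 - lam / 2) ^+ l.+1) <= 1.
Proof.
move=> x_gt1 c_ge1 lam_ge4 cx_le L_ge0 L_le.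
have e3 : 8 * expR (-3) <= 1 :> R.
  have := @expRxMexpNx_1 R 3; have := @expR_gt0 R (-3).
  have : 2 ^+ 3 <= expR 3 :> R.
    by rewrite -[3%:R]mulr1 expRM_natl lerXn2r ?nnegrE ?expR_ge0 ?expR1_ge2.
  rewrite !exprS expr0; nra.
have l_lam : 4 * l%:R <= l%:R * lam :> R by rewrite mulrC ler_wpM2l.
have cx : x <= c * x by rewrite ler_peMl //; lra.
rewrite -expRM_natl.
have : expR (c * x) * expR x * expR (l.+1%:R * (1 - lam / 2)) <= expR (-3).
  by rewrite -!expRD ler_expR -natr1; lra.
have := @expR_gt0 R (c * x); have := @expR_gt0 R x.
have := @expR_gt0 R (l.+1%:R * (1 - lam / 2)).
nra.
Qed.

Lemma jobs_weight_le (x c b lam s nI : R) (k : nat) : 0 < x -> 1 <= c -> 0 <= b -> 0 < lam ->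
  1 <= s -> 0 <= nI <= expR (c * x) ->
  8 * (b + 1) * (ln s + (c + 1) * x) / lam <= k%:R ->
  s * nI * expR (- (lam / 8)) ^+ k <= expR (- b * x).
Proof.
move=> x_gt0 c_ge1 b_ge0 lam_gt0 s_ge1 /andP [nI_ge0 nI_le] k_ge.
have k_lam : 8 * (b + 1) * (ln s + (c + 1) * x) <= k%:R * lam by rewrite -ler_pdivrMr.
have lns_ge0 := ln_ge0 s_ge1.
have b_lns : 0 <= b * ln s by rewrite mulr_ge0.
have b_cx : 0 <= b * (c * x) by rewrite !mulr_ge0 //; lra.
rewrite -expRM_natl mulrN.
apply: le_trans (_ : expR (ln s) * expR (c * x) * expR (- (k%:R * (lam / 8))) <= _).
  by rewrite ler_wpM2r ?expR_ge0 // lnK ?posrE ?ler_wpM2l //; lra.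
by rewrite -!expRD ler_expR; lra.
Qed.

End Estimates.

Unset Implicit Arguments. Set Strict Implicit.

Theorem lemma5p18 (R : realType) (M : finType) (c b : R) (S : seq (seq M))
    (L l k : nat) :
  (32 <= #|M|)%N -> 1 <= c -> uniq S -> (0 < size S)%N -> (0 < L)%N ->
  (L%:R <= 2 * ((#|M|%:R : R) `^ c)) ->
  150 * c * ln (#|M|%:R : R) / ln (ln (#|M|%:R : R)) <= l%:R ->
  8 * (b + 1) * (ln ((size S)%:R : R) + (c + 1) * ln (#|M|%:R : R)) / ln (l%:R : R)
    <= k%:R ->
  let nI := Num.truncn ((#|M|%:R : R) `^ c) in
  1 - 2 * (#|M|%:R : R) `^ (- b) <=
    #|[set hs : {ffun 'I_k -> {ffun job S nI -> 'I_L}} | `[< good_for_S l hs >]]|%:R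
    / #|{: {ffun 'I_k -> {ffun job S nI -> 'I_L}}}|%:R.
Proof.
move=> M_ge32 c_ge1 S_uniq S_gt0 L_gt0 L_le l_ge k_ge; cbv zeta; set nI := Num.truncn _.
have x_gt1 : 1 < ln (#|M|%:R : R) by apply: (@ln_natr_gt R 1); apply: leq_trans M_ge32.
have N_eq : #|M|%:R = expR (ln (#|M|%:R : R)).
  by rewrite lnK // posrE ltr0n (leq_trans _ M_ge32).
have powRE t : (#|M|%:R : R) `^ t = expR (t * ln #|M|%:R) by rewrite /powR N_eq expR_eq0 expRK.
have [b_le|b_gt] := lerP 1 (2 * (#|M|%:R : R) `^ (- b)).
  by apply: le_trans (divr_ge0 (ler0n _ _) (ler0n _ _)); lra.
have b_ge0 : 0 <= b.
  by move: b_gt; rewrite powRE; have := @expR_ge1Dx R (- b * ln #|M|%:R); nra.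
have l_ge300 := threshold_ge300 x_gt1 c_ge1 l_ge.
have lam_ge4 : 4 <= ln (l%:R : R) by apply/ltW/ln_natr_gt; rewrite -(ltr_nat R); lra.
have mass_le1 : #|cell M L|%:R * (2 * expR (1 - ln (l%:R : R) / 2) ^+ l.+1) <= 1.
  rewrite card_prod card_ord !natrM [X in _ * X * _]N_eq.
  apply: (cells_mass_le1 x_gt1 c_ge1 lam_ge4 (threshold_le_mul_ln x_gt1 c_ge1 l_ge)) => //.
  by rewrite -powRE.
have weight_le : #|{: job S nI}|%:R * expR (- (ln (l%:R : R) / 8)) ^+ k <= #|M|%:R `^ (- b).
  rewrite card_prod card_seq_sub // card_ord natrM powRE.
  apply: jobs_weight_le k_ge; rewrite ?ler1n //; try lra.
  by rewrite ler0n -powRE truncn_le powR_ge0.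
have k_gt0 : (0 < k)%N.
  have lnS_ge0 : 0 <= ln ((size S)%:R : R) by rewrite ln_ge0 // ler1n.
  have cx_gt0 : 0 < (c + 1) * ln (#|M|%:R : R) by rewrite mulr_gt0 //; lra.
  by rewrite -(ltr0n R); apply: lt_le_trans k_ge; rewrite !(mulr_gt0, invr_gt0) //; lra.
by apply: good_for_S_fraction_ge => //; rewrite -(ltr0n R); lra.
Qed.
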